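(* Let $(A,G)$ be an admissible pair with $A=(a_{ij})\in M_{Q_0}(\mathbb Z)$, and let $\Omega=\{i_1,\ldots,i_n\}$ be a $G$-orbit in $Q_0$. Then the coefficients $a^{(n)}_{ij}$ of $A^{(n)}=\mu_{i_n}\circ\cdots\circ\mu_{i_1}(A)$ are given by $$a^{(n)}_{ij}=\begin{cases}-a_{ij}&\text{if } i\in\Omega\text{ or } j\in\Omega,\\ a_{ij}+\frac12\sum_{k=1}^n\big(|a_{i,i_k}|a_{i_k,j}+a_{i,i_k}|a_{i_k,j}|\big)&\text{otherwise.}\end{cases}$$
   Context: $Q_0$ finite; $A$ skew-symmetrizable ($DA$ skew-symmetric for a positive integer diagonal $D$). Mutation $\mu_k(B)=(b'_{ij})$: $b'_{ij}=-b_{ij}$ if $k\in\{i,j\}$, else $b_{ij}+\tfrac12(|b_{ik}|b_{kj}+b_{ik}|b_{kj}|)$. An automorphism of $A$ is a permutation $g$ of $Q_0$ with $a_{gi,gj}=a_{ij}$; a group $G$ of such permutations is admissible (and $(A,G)$ an admissible pair) if for distinct $i,j$ in the same $G$-orbit there is no path of length $1$ or $2$ from $i$ to $j$ in the valued quiver of $A$ (i.e. $a_{ij}\le0$ and no $k$ with $a_{ik}>0$, $a_{kj}>0$). *)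

From HB Require Import structures.
From mathcomp Require Import all_boot all_order all_algebra all_fingroup.
Set Implicit Arguments. Unset Strict Implicit. Unset Printing Implicit Defensive.
Import Order.TTheory GRing.Theory Num.Theory.
Local Open Scope ring_scope.

Definition qmat (Q0 : finType) := Q0 -> Q0 -> int.

Definition skew_symmetrizable (Q0 : finType) (A : qmat Q0) : Prop :=
  exists d : Q0 -> nat, (forall i, (0 < d i)%N) /\
    forall i j, (d i)%:Z * A i j = - ((d j)%:Z * A j i).

(* mutation mu_k.  The term |b_ik| b_kj + b_ik |b_kj| is always even, so
   integer division by 2 is exact and equals the rational 1/2 (...). *)
Definition mutation (Q0 : finType) (k : Q0) (B : qmat Q0) : qmat Q0 :=
  fun i j =>
    if (i == k) || (j == k) then - B i j
    else B i j + ((`|B i k| * B k j + B i k * `|B k j|) %/ 2)%Z.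

(* mu_{i_n} o ... o mu_{i_1} (A) for s = [:: i_1; ...; i_n] *)
Definition mutate_seq (Q0 : finType) (s : seq Q0) (A : qmat Q0) : qmat Q0 :=
  foldl (fun B k => mutation k B) A s.

Definition is_automorphism (Q0 : finType) (A : qmat Q0) (g : {perm Q0}) : Prop :=
  forall i j, A (g i) (g j) = A i j.

Definition admissible_pair (Q0 : finType) (A : qmat Q0) (G : {group {perm Q0}}) : Prop :=
  (forall g, g \in G -> is_automorphism A g) /\
  (forall i j, j \in orbit 'P G i -> i != j ->
     A i j <= 0 /\ ~ (exists k, 0 < A i k /\ 0 < A k j)).

From HB Require Import structures.
From mathcomp Require Import all_boot all_order all_algebra all_fingroup.
From mathcomp Require Import zify.
Set Implicit Arguments.
Unset Strict Implicit.
Unset Printing Implicit Defensive.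

Import Order.TTheory GRing.Theory Num.Theory.
Local Open Scope ring_scope.

(* Skew-symmetrizability and admissibility force A to vanish on the block of
   an orbit, since A x y and A y x are both nonpositive there while D A is
   skew-symmetric.  Hence a mutation at an orbit vertex never changes the
   row or column of another orbit vertex, so the successive mutations at the
   orbit vertices do not interact and their corrections simply add up. *)

Lemma dvdz2_add_norm (c : int) : (2 %| c + `|c|)%Z.
Proof.
case: (lerP 0 c) => hc; last by rewrite (ltr0_norm hc) subrr dvdz0.
by rewrite (ger0_norm hc); apply/dvdzP; exists c; lia.
Qed.

Lemma dvdz2_mutation_term (a b : int) : (2 %| `|a| * b + a * `|b|)%Z.
Proof.
case: (lerP 0 a) => ha; first by rewrite (ger0_norm ha) -mulrDr dvdz_mull ?dvdz2_add_norm.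
rewrite (ltr0_norm ha) mulNr addrC -mulrBr dvdz_mull //.
by rewrite -normrN addrC dvdz2_add_norm.
Qed.

Lemma dvdz2_mutation_sum (Q0 : finType) (A : qmat Q0) (s : seq Q0) (i j : Q0) :
  (2 %| \sum_(k <- s) (`|A i k| * A k j + A i k * `|A k j|))%Z.
Proof.
by apply: (big_ind (fun x : int => (2 %| x)%Z)) => // [x y|k _];
  [exact: rpredD | exact: dvdz2_mutation_term].
Qed.

Section SkewSymmetrizable.

Variables (Q0 : finType) (A : qmat Q0).
Hypothesis A_skew : skew_symmetrizable A.

Lemma skew_symmetrizable_diag0 x : A x x = 0.
Proof. by have [d [d_pos dA]] := A_skew; have := dA x x; have := d_pos x; lia. Qed.

Lemma skew_symmetrizable_nonpos_pair0 x y : A x y <= 0 -> A y x <= 0 -> A x y = 0.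
Proof.
by have [d [d_pos dA]] := A_skew; have := dA x y; have := d_pos x; have := d_pos y; nia.
Qed.

Lemma admissible_orbit_block0 (G : {group {perm Q0}}) (i0 : Q0) :
  admissible_pair A G ->
  {in orbit 'P G i0 &, forall x y, A x y = 0}.
Proof.
move=> [_ adm] x y x_orb y_orb.
have [<-|neq_xy] := eqVneq x y; first exact: skew_symmetrizable_diag0.
have y_orb_x : y \in orbit 'P G x by rewrite (orbit_transl _ y_orb) orbit_sym.
have x_orb_y : x \in orbit 'P G y by rewrite orbit_sym.
have [Axy_le0 _] := adm _ _ y_orb_x neq_xy.
have [Ayx_le0 _] := adm _ _ x_orb_y (contra_neq esym neq_xy).
exact: skew_symmetrizable_nonpos_pair0.
Qed.

End SkewSymmetrizable.

Definition summed_mutation (Q0 : finType) (s : seq Q0) (A : qmat Q0) : qmat Q0 :=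
  fun i j =>
    if (i \in s) || (j \in s) then - A i j
    else A i j + ((\sum_(k <- s) (`|A i k| * A k j + A i k * `|A k j|)) %/ 2)%Z.

Section MutationOnZeroBlock.

Variables (Q0 : finType) (A : qmat Q0) (P : {pred Q0}).
Hypothesis A_block0 : {in P &, forall x y, A x y = 0}.

Section Step.

Variables (p : seq Q0) (k : Q0).
Hypotheses (p_sub : {subset p <= P}) (Pk : k \in P) (k_notin_p : k \notin p).

Let A_col0 l : l \in p -> A l k = 0.
Proof. by move=> lp; apply: A_block0 => //; exact: p_sub. Qed.

Let A_row0 l : l \in p -> A k l = 0.
Proof. by move=> lp; apply: A_block0 => //; exact: p_sub. Qed.

Lemma summed_mutation_col x : summed_mutation p A x k = A x k.
Proof.
rewrite /summed_mutation (negbTE k_notin_p) orbF.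
case: ifP => [xp|_]; first by rewrite (A_col0 xp) oppr0.
rewrite big1_seq ?div0z ?addr0 // => l /= lp.
by rewrite (A_col0 lp) normr0 !mulr0.
Qed.

Lemma summed_mutation_row y : summed_mutation p A k y = A k y.
Proof.
rewrite /summed_mutation (negbTE k_notin_p) /=.
case: ifP => [yp|_]; first by rewrite (A_row0 yp) oppr0.
rewrite big1_seq ?div0z ?addr0 // => l /= lp.
by rewrite (A_row0 lp) normr0 !mul0r.
Qed.

Lemma mutation_summed_mutation :
  mutation k (summed_mutation p A) =2 summed_mutation (rcons p k) A.
Proof.
move=> i j; rewrite /mutation !summed_mutation_col !summed_mutation_row.
have [->|ik] := eqVneq i k.
  by rewrite /= summed_mutation_row /summed_mutation mem_rcons mem_head.
have [->|jk] := eqVneq j k.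
  by rewrite orbT /= summed_mutation_col /summed_mutation !mem_rcons mem_head orbT.
rewrite /summed_mutation !mem_rcons !in_cons (negbTE ik) (negbTE jk) /=.
case: (boolP (i \in p)) => [ip|ip] /=.
  by rewrite (A_col0 ip) normr0 !mul0r addr0.
case: (boolP (j \in p)) => [jp|jp] /=.
  by rewrite (A_row0 jp) normr0 !mulr0 addr0.
(* halving commutes with the sum because every summand is even *)
by rewrite big_rcons /= -addrA -divzDl // dvdz2_mutation_sum.
Qed.

End Step.

Lemma mutate_seq_on_zero_block (s : seq Q0) :
  uniq s -> {subset s <= P} -> mutate_seq s A =2 summed_mutation s A.
Proof.
elim/last_ind: s => [|p k IH].
  by move=> _ _ i j; rewrite /summed_mutation big_nil div0z addr0.
rewrite rcons_uniq => /andP[k_notin_p p_uniq] pk_sub i j.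
have p_sub : {subset p <= P} by move=> x xp; rewrite pk_sub // mem_rcons in_cons xp orbT.
have Pk : k \in P by rewrite pk_sub // mem_rcons mem_head.
rewrite /mutate_seq foldl_rcons -/(mutate_seq p A).
have {}IH := IH p_uniq p_sub.
by rewrite -mutation_summed_mutation // /mutation !IH.
Qed.

End MutationOnZeroBlock.

Theorem mainTheorem8 (Q0 : finType) (A : Q0 -> Q0 -> int)
  (G : {group {perm Q0}}) (i0 : Q0) (s : seq Q0) :
  skew_symmetrizable A ->
  admissible_pair A G ->
  uniq s ->
  (forall x, (x \in s) = (x \in orbit 'P G i0)) ->
  forall i j,
    mutate_seq s A i j =
      if (i \in orbit 'P G i0) || (j \in orbit 'P G i0) then - A i j
      else A i j + ((\sum_(k <- s) (`|A i k| * A k j + A i k * `|A k j|)) %/ 2)%Z.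
Proof.
move=> A_skew A_adm s_uniq s_orbit i j.
have s_sub : {subset s <= orbit 'P G i0} by move=> x; rewrite s_orbit.
rewrite (mutate_seq_on_zero_block (admissible_orbit_block0 A_skew A_adm) s_uniq s_sub).
by rewrite /summed_mutation !s_orbit.
Qed.
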